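(* For every function $f:\mathbb{N}\to\mathbb{N}$ and all positive integers $a$ and $d$, the set $\{2^{f(n)}(a+dn)\mid n\in\mathbb{N}\}$ is a sufficient set.
   Context: $\mathbb{N}=\{0,1,2,\dots\}$. Let $T:\mathbb{Z}\to\mathbb{Z}$ be $T(x)=x/2$ if $x$ is even and $T(x)=(3x+1)/2$ if $x$ is odd. The $T$-orbit of $x$ is the sequence $x,T(x),T^2(x),\dots$. Two positive integers $x,y$ merge if there exist nonnegative integers $k,j$ with $T^k(x)=T^j(y)$. A set $S$ of positive integers is sufficient if every positive integer merges with some element of $S$. *)

From Stdlib Require Import ZArith.
Open Scope Z_scope.

Definition T (x : Z) : Z :=
  if Z.even x then x / 2 else (3 * x + 1) / 2.

Definition Titer (k : nat) (x : Z) : Z := Nat.iter k T x.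

Definition merge (x y : Z) : Prop :=
  exists k j : nat, Titer k x = Titer j y.

Definition sufficient (S : Z -> Prop) : Prop :=
  (forall s, S s -> 0 < s) /\
  (forall x, 0 < x -> exists s, S s /\ merge x s).

(* Let x > 0.  Removing the factors 2 of x and taking one odd step
   leads to some u > 0 with 3 not dividing u.  Write d = 2^e d1 with d1 odd;
   after e steps the progression a + d N becomes a1 + D N with D odd
   (Terras).  The heart of the argument is that the predecessors of u meet
   every residue class modulo every odd D: writing D = 3^t m with m coprime
   to 6, a predecessor is produced from a parity vector (backward closed
   form), built from a prefix of "neutral" blocks whose offset tunes the
   class modulo m and a tail of even steps whose length is adjusted by
   3-adic lifting (2 is a primitive root modulo powers of 3).  A predecessor
   y of u in the class of a1 modulo D, multiplied by a suitable power of 2,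
   is a term a1 + D N of the progression; then the element 2^f(N) (a + d N)
   halves to a + d N, reaches a1 + D N = 2^j y, then y, then u. *)
From Stdlib Require Import ZArith Zwf Znumtheory Lia List Classical.
Import ListNotations.
Open Scope Z_scope.

(* Powers with a natural-number exponent: the exponents in this development
   are step counts, so it is convenient to index them by [nat]. *)
Definition powN (b : Z) (n : nat) : Z := b ^ Z.of_nat n.

Lemma powN_0 (b : Z) : powN b 0 = 1.
Proof. reflexivity. Qed.

Lemma powN_S (b : Z) (n : nat) : powN b (S n) = b * powN b n.
Proof. unfold powN. rewrite Nat2Z.inj_succ, Z.pow_succ_r; lia. Qed.

Lemma powN_add (b : Z) (n k : nat) : powN b (n + k) = powN b n * powN b k.
Proof. unfold powN. rewrite Nat2Z.inj_add, Z.pow_add_r; lia. Qed.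

Lemma powN_mul (b : Z) (n k : nat) : powN b (n * k) = powN (powN b n) k.
Proof. unfold powN. rewrite Nat2Z.inj_mul, Z.pow_mul_r; lia. Qed.

Lemma powN_pos (b : Z) (n : nat) : 0 < b -> 0 < powN b n.
Proof. intros Hb. unfold powN. apply Z.pow_pos_nonneg; lia. Qed.

Lemma divide_powN_sub1 (m b : Z) (n : nat) : (m | b - 1) -> (m | powN b n - 1).
Proof.
  intros H. induction n as [|n IH].
  - rewrite powN_0. apply Z.divide_0_r.
  - rewrite powN_S. replace (b * powN b n - 1) with (b * (powN b n - 1) + (b - 1)) by ring.
    apply Z.divide_add_r; [apply Z.divide_mul_r|]; assumption.
Qed.

Lemma rel_prime_powN (m b : Z) (n : nat) : rel_prime m b -> rel_prime m (powN b n).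
Proof.
  intros H. induction n as [|n IH].
  - rewrite powN_0. apply rel_prime_sym, rel_prime_1.
  - rewrite powN_S. apply rel_prime_mult; assumption.
Qed.

Lemma rel_prime_of_prime (p m : Z) : prime p -> ~ (p | m) -> rel_prime m p.
Proof. intros Hp H. apply rel_prime_sym, prime_rel_prime; assumption. Qed.

Lemma divide_mul_rel_prime (a b c : Z) : rel_prime a b -> (a | c) -> (b | c) -> (a * b | c).
Proof.
  intros Hab [k ->] Hb.
  assert (Hk : (b | k)) by (apply Gauss with a; [rewrite Z.mul_comm|apply rel_prime_sym]; assumption).
  destruct Hk as [l ->]. exists l. ring.
Qed.

Lemma inverse_mod (m b : Z) : rel_prime m b -> exists b', (m | b * b' - 1).
Proof.
  intros H. destruct (rel_prime_bezout m b H) as [x y Hxy].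
  exists y. exists (- x). lia.
Qed.

Lemma split_powN (p : Z) : 1 < p -> forall n, 0 < n -> exists e q, n = powN p e * q /\ ~ (p | q).
Proof.
  intros Hp n Hn. induction n as [n IH] using (well_founded_induction (Zwf_well_founded 0)).
  destruct (Zdivide_dec p n) as [[k Hk] | Hnd].
  - assert (0 < k) by nia.
    destruct (IH k) as [e [q [He Hq]]]; [unfold Zwf; nia | assumption |].
    exists (S e), q. split; [rewrite powN_S, Hk, He; ring | assumption].
  - exists 0%nat, n. rewrite powN_0. split; [ring | assumption].
Qed.

Lemma pigeonhole (M : nat) : forall g : nat -> nat, (forall i, (i <= M)%nat -> (g i < M)%nat) ->
  exists i j, (i < j <= M)%nat /\ g i = g j.
Proof.
  induction M as [|M IH]; intros g Hg.
  - specialize (Hg 0%nat ltac:(lia)). lia.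
  - destruct (classic (exists i, (i <= M)%nat /\ g i = g (S M))) as [[i [Hi Hgi]] | Hnew].
    { exists i, (S M). split; [lia | assumption]. }
    (* otherwise squeeze the values of [g] on [0..M] into [0..M-1] *)
    assert (Hne : forall i, (i <= M)%nat -> g i <> g (S M)) by (intros i Hi E; apply Hnew; eauto).
    set (g' := fun i => if Nat.ltb (g i) (g (S M)) then g i else (g i - 1)%nat).
    destruct (IH g') as [i [j [Hij Hg']]].
    + intros i Hi. unfold g'. pose proof (Hg i ltac:(lia)). pose proof (Hg (S M) ltac:(lia)).
      pose proof (Hne i Hi). destruct (Nat.ltb_spec (g i) (g (S M))); lia.
    + exists i, j. split; [lia|]. unfold g' in Hg'.
      pose proof (Hne i ltac:(lia)). pose proof (Hne j ltac:(lia)).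
      destruct (Nat.ltb_spec (g i) (g (S M))); destruct (Nat.ltb_spec (g j) (g (S M))); lia.
Qed.

Lemma period (b m : Z) : 0 < m -> rel_prime m b -> exists P, (1 <= P)%nat /\ (m | powN b P - 1).
Proof.
  intros Hm Hr.
  destruct (pigeonhole (Z.to_nat m) (fun i => Z.to_nat (powN b i mod m))) as [i [j [Hij He]]].
  { intros i _. pose proof (Z.mod_pos_bound (powN b i) m Hm). lia. }
  exists (j - i)%nat. split; [lia|].
  pose proof (Z.mod_pos_bound (powN b i) m Hm). pose proof (Z.mod_pos_bound (powN b j) m Hm).
  apply Z2Nat.inj in He; try lia.
  assert (Hd : (m | powN b i * (powN b (j - i) - 1))).
  { rewrite Z.mul_sub_distr_l, <- powN_add, Nat.add_comm, Nat.sub_add, Z.mul_1_r by lia.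
    exists (powN b j / m - powN b i / m).
    pose proof (Z.div_mod (powN b j) m ltac:(lia)). pose proof (Z.div_mod (powN b i) m ltac:(lia)). lia. }
  apply Gauss with (powN b i); [assumption | apply rel_prime_powN; assumption].
Qed.

Lemma T_even (q : Z) : T (2 * q) = q.
Proof.
  unfold T. rewrite Z.even_mul. cbn -[Z.mul Z.div].
  rewrite Z.mul_comm, Z.div_mul; lia.
Qed.

Lemma T_odd (q : Z) : T (2 * q + 1) = 3 * q + 2.
Proof.
  unfold T. rewrite Z.even_add, Z.even_mul. cbn -[Z.mul Z.div Z.add].
  replace (3 * (2 * q + 1) + 1) with ((3 * q + 2) * 2) by ring.
  rewrite Z.div_mul; lia.
Qed.

Lemma even_or_odd (y : Z) : exists q, y = 2 * q \/ y = 2 * q + 1.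
Proof.
  exists (y / 2). pose proof (Z.div_mod y 2 ltac:(lia)).
  pose proof (Z.mod_pos_bound y 2 ltac:(lia)). lia.
Qed.

Lemma Titer_S_r (n : nat) (y : Z) : Titer (S n) y = Titer n (T y).
Proof. unfold Titer. rewrite <- Nat.iter_succ_r. reflexivity. Qed.

Lemma Titer_add (k l : nat) (y : Z) : Titer (k + l) y = Titer k (Titer l y).
Proof. unfold Titer. apply Nat.iter_add. Qed.

Lemma Titer_halve (k : nat) (y : Z) : Titer k (powN 2 k * y) = y.
Proof.
  revert y; induction k as [|k IH]; intros y.
  - rewrite powN_0, Z.mul_1_l. reflexivity.
  - rewrite Titer_S_r, powN_S, <- Z.mul_assoc, T_even. apply IH.
Qed.

(* [T] maps non-positive integers to non-positive integers, so only positive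
   integers can reach a positive integer. *)
Lemma Titer_nonpos (n : nat) (y : Z) : y <= 0 -> Titer n y <= 0.
Proof.
  induction n as [|n IH]; intros Hy; [assumption|].
  unfold Titer in *; simpl. specialize (IH Hy).
  destruct (even_or_odd (Nat.iter n T y)) as [q [E | E]]; rewrite E in *;
    [rewrite T_even | rewrite T_odd]; lia.
Qed.

Lemma T_shift (r : Z) : exists o : nat, forall w, T (r + 2 * w) = T r + powN 3 o * w.
Proof.
  destruct (even_or_odd r) as [q [-> | ->]].
  - exists 0%nat. intros w. replace (2 * q + 2 * w) with (2 * (q + w)) by ring.
    rewrite !T_even, powN_0. ring.
  - exists 1%nat. intros w. replace (2 * q + 1 + 2 * w) with (2 * (q + w) + 1) by ring.
    rewrite !T_odd. change (powN 3 1) with 3. ring.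
Qed.

Lemma Titer_shift (k : nat) (r : Z) :
  exists o : nat, forall s, Titer k (r + powN 2 k * s) = Titer k r + powN 3 o * s.
Proof.
  revert r; induction k as [|k IH]; intros r.
  - exists 0%nat. intros s. rewrite !powN_0. reflexivity.
  - destruct (T_shift r) as [o1 H1]. destruct (IH (T r)) as [o2 H2].
    exists (o1 + o2)%nat. intros s.
    rewrite !Titer_S_r, powN_S, <- Z.mul_assoc, H1, Z.mul_comm, <- Z.mul_assoc, H2, powN_add.
    ring.
Qed.

(* A word [v : list bool] prescribes the parities of the
   first [length v] steps of an orbit ([true] = odd step).  Running the
   steps backwards from [u] gives the affine relation of [word_preimage]:
   [odd_steps v] counts the odd steps and [offset v] is the additive term. *)
Fixpoint odd_steps (v : list bool) : nat :=
  match v with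
  | [] => 0
  | b :: v' => (if b then 1 else 0) + odd_steps v'
  end.

Fixpoint offset (v : list bool) : Z :=
  match v with
  | [] => 0
  | b :: v' => (if b then powN 3 (odd_steps v') else 0) + 2 * offset v'
  end.

Lemma powN3_odd (k : nat) : exists s, powN 3 k = 2 * s + 1.
Proof.
  induction k as [|k [s Hs]]; [exists 0; reflexivity|].
  exists (3 * s + 1). rewrite powN_S, Hs. ring.
Qed.

(* Backward closed form: the divisibility-free identity
   [3^(odd steps) * y + offset = 2^(length) * u] forces the orbit of [y] to
   follow the word and land on [u]; the parities are read off the identity. *)
Lemma word_preimage (v : list bool) : forall y u,
  powN 3 (odd_steps v) * y + offset v = powN 2 (length v) * u -> Titer (length v) y = u.
Proof.
  induction v as [|b v IH]; intros y u H.
  - cbn [odd_steps offset length] in H. rewrite !powN_0 in H. unfold Titer; simpl. lia.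
  - cbn [length]. rewrite Titer_S_r. apply IH. cbn [odd_steps offset length] in H.
    rewrite powN_S in H. destruct (powN3_odd (odd_steps v)) as [s Hs].
    destruct b, (even_or_odd y) as [q [-> | ->]]; cbn [Nat.add] in H;
      rewrite ?powN_S, ?T_even, ?T_odd in *; rewrite Hs in *; lia.
Qed.

Lemma word_preimage_in_class (v : list bool) (u a N : Z) :
  (powN 3 (odd_steps v) * N | powN 2 (length v) * u - offset v - powN 3 (odd_steps v) * a) ->
  exists y, Titer (length v) y = u /\ (N | y - a).
Proof.
  intros [c Hc]. exists (a + c * N). split.
  - apply word_preimage. lia.
  - exists c. ring.
Qed.

Lemma odd_steps_app (v w : list bool) : odd_steps (v ++ w) = (odd_steps v + odd_steps w)%nat.
Proof. induction v as [|b v IH]; simpl; [reflexivity|]. rewrite IH. lia. Qed.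

Lemma offset_app (v w : list bool) :
  offset (v ++ w) = powN 3 (odd_steps w) * offset v + powN 2 (length v) * offset w.
Proof.
  induction v as [|b v IH]; cbn [app offset length odd_steps].
  - rewrite powN_0. ring.
  - rewrite IH, odd_steps_app, powN_S. destruct b; [rewrite powN_add|]; ring.
Qed.

Lemma odd_steps_zeros (n : nat) : odd_steps (repeat false n) = 0%nat.
Proof. induction n; simpl; auto. Qed.

Lemma offset_zeros (n : nat) : offset (repeat false n) = 0.
Proof. induction n as [|n IH]; cbn; [reflexivity|]. rewrite IH. ring. Qed.

Lemma odd_steps_ones (n : nat) : odd_steps (repeat true n) = n.
Proof. induction n; simpl; auto. Qed.

Lemma offset_ones (n : nat) : offset (repeat true n) = powN 3 n - powN 2 n.
Proof.
  induction n as [|n IH]; cbn [repeat offset]; [reflexivity|].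
  rewrite IH, odd_steps_ones, !powN_S. ring.
Qed.

Lemma offset_swap (w : list bool) :
  offset ([false; true] ++ w) = offset ([true; false] ++ w) + powN 3 (odd_steps w).
Proof. rewrite !offset_app. cbn [offset odd_steps length]. change (powN 2 2) with 4. rewrite !powN_0. ring. Qed.

(* Words that are invisible modulo [m]: appending them multiplies by
   [3^(odd steps)] and [2^(length)], both [1] modulo [m].  Offsets of
   neutral words simply add up modulo [m]. *)
Definition neutral (m : Z) (v : list bool) : Prop :=
  (m | powN 3 (odd_steps v) - 1) /\ (m | powN 2 (length v) - 1).

Lemma neutral_app (m : Z) (v w : list bool) : neutral m v -> neutral m w ->
  neutral m (v ++ w) /\ (m | offset (v ++ w) - (offset v + offset w)).
Proof.
  intros [Hv3 Hv2] [Hw3 Hw2].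
  assert (Hsplit : forall b i j, powN b (i + j) - 1 = powN b i * (powN b j - 1) + (powN b i - 1))
    by (intros; rewrite powN_add; ring).
  split; [split|].
  - rewrite odd_steps_app, Hsplit. apply Z.divide_add_r; [apply Z.divide_mul_r|]; assumption.
  - rewrite length_app, Hsplit. apply Z.divide_add_r; [apply Z.divide_mul_r|]; assumption.
  - rewrite offset_app.
    replace (powN 3 (odd_steps w) * offset v + powN 2 (length v) * offset w - (offset v + offset w))
      with ((powN 3 (odd_steps w) - 1) * offset v + (powN 2 (length v) - 1) * offset w) by ring.
    apply Z.divide_add_r; apply Z.divide_mul_l; assumption.
Qed.

Lemma neutral_repeat (m : Z) (v : list bool) (n : nat) : neutral m v ->
  neutral m (concat (repeat v n)) /\ (m | offset (concat (repeat v n)) - Z.of_nat n * offset v).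
Proof.
  intros Hv. induction n as [|n [IHn IHoff]].
  - split; [split|]; cbn; apply Z.divide_0_r.
  - cbn [repeat concat]. destruct (neutral_app m _ _ Hv IHn) as [Hn [k Hk]].
    split; [assumption|]. destruct IHoff as [l Hl].
    exists (k + l). rewrite Nat2Z.inj_succ. lia.
Qed.

(* When [3^R] and [2^Q] are [1] modulo [m] the
   blocks are neutral, and they serve to tune offsets modulo [m]. *)
Definition block (R Q : nat) (b : bool) : list bool :=
  (if b then [false; true] else [true; false])
    ++ repeat true (R - 1) ++ repeat false ((Q - 1) * (R + 1)).

Lemma block_neutral (m : Z) (R Q : nat) (b : bool) : (1 <= R)%nat -> (1 <= Q)%nat ->
  (m | powN 3 R - 1) -> (m | powN 2 Q - 1) -> neutral m (block R Q b).
Proof.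
  intros HR HQ H3 H2. unfold block. split.
  - rewrite !odd_steps_app, odd_steps_ones, odd_steps_zeros.
    replace (odd_steps (if b then [false; true] else [true; false]) + (R - 1 + 0))%nat with R
      by (destruct b; simpl; lia).
    assumption.
  - rewrite !length_app, !repeat_length.
    replace (length (if b then [false; true] else [true; false]) + (R - 1 + (Q - 1) * (R + 1)))%nat
      with (Q * (R + 1))%nat by (destruct b; simpl; nia).
    rewrite powN_mul. apply divide_powN_sub1. assumption.
Qed.

Lemma block_swap (R Q : nat) :
  offset (block R Q true) = offset (block R Q false) + powN 3 (R - 1).
Proof.
  unfold block. rewrite offset_swap, odd_steps_app, odd_steps_ones, odd_steps_zeros, Nat.add_0_r.
  reflexivity.
Qed.

Lemma adjustable_word (m : Z) : 0 < m -> ~ (2 | m) -> ~ (3 | m) ->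
  forall c, exists W, neutral m W /\ (m | offset W - c).
Proof.
  intros Hm Hm2 Hm3 c.
  destruct (period 2 m Hm (rel_prime_of_prime 2 m prime_2 Hm2)) as [Q [HQ HQm]].
  destruct (period 3 m Hm (rel_prime_of_prime 3 m prime_3 Hm3)) as [R [HR HRm]].
  pose proof (block_neutral m R Q true HR HQ HRm HQm) as Htrue.
  pose proof (block_neutral m R Q false HR HQ HRm HQm) as Hfalse.
  (* a neutral word [D] with offset [3^(R-1)] modulo [m] *)
  set (D := block R Q true ++ concat (repeat (block R Q false) (Z.to_nat m - 1))).
  destruct (neutral_repeat m _ (Z.to_nat m - 1) Hfalse) as [Hrest [k1 Hk1]].
  destruct (neutral_app m _ _ Htrue Hrest) as [HD [k2 Hk2]].
  fold D in HD, Hk2.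
  assert (HoffD : (m | offset D - powN 3 (R - 1))).
  { exists (k1 + k2 + offset (block R Q false)). rewrite block_swap in Hk2.
    rewrite Nat2Z.inj_sub, Z2Nat.id in Hk1 by lia. change (Z.of_nat 1) with 1 in Hk1. lia. }
  (* repeat it [3c] times, since [3 * 3^(R-1) = 3^R] is [1] modulo [m] *)
  set (tau := (3 * c) mod m).
  assert (Htau : (m | tau - 3 * c)).
  { exists (- (3 * c / m)). pose proof (Z.div_mod (3 * c) m ltac:(lia)). unfold tau. lia. }
  pose proof (Z.mod_pos_bound (3 * c) m Hm).
  destruct (neutral_repeat m D (Z.to_nat tau) HD) as [HW [k3 Hk3]].
  exists (concat (repeat D (Z.to_nat tau))). split; [assumption|].
  rewrite Z2Nat.id in Hk3 by (unfold tau; lia).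
  destruct HoffD as [k4 Hk4]. destruct Htau as [k5 Hk5]. destruct HRm as [k6 Hk6].
  assert (E3 : powN 3 R = 3 * powN 3 (R - 1)) by (rewrite <- powN_S; f_equal; lia).
  exists (k3 + tau * k4 + k5 * powN 3 (R - 1) + c * k6). nia.
Qed.

(* If [h = 1 + 3^r w] with [r >= 1] and [3] not dividing
   [w], the powers of [h] reach every class of [1 + 3^r Z] modulo every
   power of 3.  First, cubing raises the exact 3-adic order of [h - 1] by one. *)
Lemma cube_lift (r : nat) (w : Z) : ~ (3 | w) -> forall j, exists w',
  powN (1 + powN 3 (S r) * w) (Nat.pow 3 j) = 1 + powN 3 (S r + j) * w' /\ ~ (3 | w').
Proof.
  intros Hw j. induction j as [|j [w' [Hj Hw']]].
  - exists w. rewrite Nat.add_0_r. split; [cbn; unfold powN; simpl; ring | assumption].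
  - set (e := powN 3 (r + j)).
    exists (w' + 3 * (e * w' * w' + e * e * w' * w' * w')). split.
    + rewrite Nat.pow_succ_r', Nat.mul_comm, powN_mul, Hj.
      replace (S r + S j)%nat with (S (S (r + j))) by lia.
      replace (S r + j)%nat with (S (r + j)) by lia.
      rewrite !powN_S, powN_0. fold e.
      ring.
    + intros [k Hk]. apply Hw'. exists (k - (e * w' * w' + e * e * w' * w' * w')). lia.
Qed.

Lemma base3_digit (q X : Z) : ~ (3 | X) -> exists d : nat, (d <= 2)%nat /\ (3 | q + X * Z.of_nat d).
Proof.
  intros HX.
  pose proof (Z.div_mod q 3 ltac:(lia)). pose proof (Z.mod_pos_bound q 3 ltac:(lia)).
  pose proof (Z.div_mod X 3 ltac:(lia)). pose proof (Z.mod_pos_bound X 3 ltac:(lia)).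
  assert (X mod 3 <> 0) by (intros E; apply HX; exists (X / 3); lia).
  set (a := q / 3) in *. set (b := X / 3) in *.
  assert (Hq : q mod 3 = 0 \/ q mod 3 = 1 \/ q mod 3 = 2) by lia.
  assert (Hx : X mod 3 = 1 \/ X mod 3 = 2) by lia.
  destruct Hq as [Hq | [Hq | Hq]]; [|destruct Hx as [Hx | Hx]..].
  - exists 0%nat. split; [lia|]. exists a. lia.
  - exists 2%nat. split; [lia|]. exists (a + 2 * b + 1). lia.
  - exists 1%nat. split; [lia|]. exists (a + b + 1). lia.
  - exists 1%nat. split; [lia|]. exists (a + b + 1). lia.
  - exists 2%nat. split; [lia|]. exists (a + 2 * b + 2). lia.
Qed.

Lemma prime_not_divide_mul (p a b : Z) : prime p -> ~ (p | a) -> ~ (p | b) -> ~ (p | a * b).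
Proof. intros Hp Ha Hb H. apply prime_mult in H; tauto. Qed.

Lemma prime_not_divide_powN (p b : Z) (n : nat) : prime p -> ~ (p | b) -> ~ (p | powN b n).
Proof.
  intros Hp Hb. induction n as [|n IH].
  - rewrite powN_0. intros H1. apply Z.divide_1_r in H1. destruct Hp. lia.
  - rewrite powN_S. apply prime_not_divide_mul; assumption.
Qed.

(* Hensel-type lifting, one 3-adic digit at a time: multiplying by
   [h^(3^j)] adjusts the digit of weight [3^(r+j)] without disturbing the
   lower ones. *)
Lemma three_adic_lift (r : nat) (w h : Z) : h = 1 + powN 3 (S r) * w -> ~ (3 | w) ->
  forall j A z, ~ (3 | A) -> (powN 3 (S r) | z - A) ->
  exists f, (powN 3 (S r + j) | A * powN h f - z).
Proof.
  intros Hh Hw j. induction j as [|j IH]; intros A z HA Hz.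
  - exists 0%nat. rewrite Nat.add_0_r, powN_0. destruct Hz as [k Hk]. exists (- k). lia.
  - destruct (IH A z HA Hz) as [f [q Hq]].
    destruct (cube_lift r w Hw j) as [w' [Hg Hw']]. rewrite <- Hh in Hg.
    assert (H3h : (3 | h - 1)) by (rewrite Hh, powN_S; exists (powN 3 r * w); ring).
    set (X := A * powN h f * w').
    assert (Hh3 : ~ (3 | h)) by (intros [k Hk]; destruct H3h as [l Hl]; lia).
    assert (HX : ~ (3 | X)) by (unfold X; repeat apply prime_not_divide_mul; auto using prime_3, prime_not_divide_powN).
    destruct (base3_digit q X HX) as [dd [Hdd [c Hc]]].
    exists (f + Nat.pow 3 j * dd)%nat.
    rewrite (powN_add h), (powN_mul h), Hg.
    set (n := (S r + j)%nat) in *.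
    replace (S r + S j)%nat with (S n) by (unfold n; lia).
    rewrite powN_S.
    assert (Hn : (3 | powN 3 n)) by (unfold n; rewrite Nat.add_succ_l, powN_S; apply Z.divide_factor_l).
    destruct Hn as [e He].
    assert (Hdd' : dd = 0%nat \/ dd = 1%nat \/ dd = 2%nat) by lia.
    destruct Hdd' as [-> | [-> | ->]]; cbn [Z.of_nat] in Hc; rewrite ?powN_S, powN_0.
    + exists c. nia.
    + exists c. unfold X in Hc. nia.
    + exists (c + e * X * w'). unfold X in *. nia.
Qed.

(* Since 2 is a primitive root modulo every power of 3, [2^eps * u = -1]
   is solvable modulo [3^n] whenever 3 does not divide [u]. *)
Lemma two_power_solves (u : Z) (n : nat) : ~ (3 | u) -> exists eps, (powN 3 n | powN 2 eps * u + 1).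
Proof.
  intros Hu.
  assert (Hlift : forall A, ~ (3 | A) -> (3 | -1 - A) -> exists f, (powN 3 n | A * powN 4 f + 1)).
  { intros A HA H3. destruct (three_adic_lift 0 1 4 eq_refl ltac:(intros [k Hk]; lia) n A (-1) HA)
      as [f [k Hk]]; [exact H3|].
    exists f, (3 * k). rewrite powN_S in Hk. lia. }
  pose proof (Z.div_mod u 3 ltac:(lia)). pose proof (Z.mod_pos_bound u 3 ltac:(lia)).
  assert (u mod 3 <> 0) by (intros E; apply Hu; exists (u / 3); lia).
  destruct (Z.eq_dec (u mod 3) 2) as [E | E].
  - destruct (Hlift u Hu) as [f Hf]; [exists (- (u / 3) - 1); lia|].
    exists (2 * f)%nat. rewrite powN_mul. change (powN 2 2) with 4. rewrite Z.mul_comm. exact Hf.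
  - destruct (Hlift (2 * u)) as [f Hf].
    + apply prime_not_divide_mul; [apply prime_3| |]; [intros [k Hk]; lia | exact Hu].
    + exists (- (u / 3) * 2 - 1). lia.
    + exists (S (2 * f)). rewrite powN_S, powN_mul. change (powN 2 2) with 4.
      replace (2 * powN 4 f * u) with (2 * u * powN 4 f) by ring. exact Hf.
Qed.

(* Suppose [2^H = 1 + 3^(r+1) w] is [1] modulo [m],
   and the prefix [V0] followed by [eps] even steps already meets the target
   condition of [word_preimage_in_class] modulo [m] and modulo [3^(r+1)].
   Appending further blocks of [H] even steps keeps the condition modulo [m]
   and, by 3-adic lifting, fixes it modulo any power of 3. *)
Lemma complete_prefix (u a m w : Z) (V0 : list bool) (H eps r : nat) :
  ~ (3 | u) -> ~ (3 | m) -> (m | powN 2 H - 1) ->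
  powN 2 H = 1 + powN 3 (S r) * w -> ~ (3 | w) ->
  (powN 3 (S r) | offset V0 + powN 3 (odd_steps V0) * a - powN 2 (length V0 + eps) * u) ->
  (m | powN 2 (length V0 + eps) * u - offset V0 - powN 3 (odd_steps V0) * a) ->
  forall t, exists y n, Titer n y = u /\ (powN 3 t * m | y - a).
Proof.
  intros Hu3 Hm3 HmH Hh Hw H3 Hm t.
  set (k := odd_steps V0) in *.
  set (A := powN 2 (length V0 + eps) * u) in *.
  set (zz := offset V0 + powN 3 k * a) in *.
  assert (HA : ~ (3 | A)).
  { apply prime_not_divide_mul; [apply prime_3| |assumption].
    apply prime_not_divide_powN; [apply prime_3 | intros [c Hc]; lia]. }
  destruct (three_adic_lift r w (powN 2 H) Hh Hw (k + t) A zz HA) as [f Hf].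
  { replace (zz - A) with (offset V0 + powN 3 k * a - A) by (unfold zz; ring). assumption. }
  set (E := A * powN (powN 2 H) f - zz) in *.
  assert (H3E : (powN 3 (k + t) | E)).
  { apply Z.divide_trans with (2 := Hf). exists (powN 3 (S r)). rewrite powN_add. ring. }
  assert (HmE : (m | E)).
  { replace E with (A * (powN (powN 2 H) f - 1) + (A - zz)) by (unfold E; ring).
    apply Z.divide_add_r; [apply Z.divide_mul_r, divide_powN_sub1; assumption|].
    replace (A - zz) with (A - offset V0 - powN 3 k * a) by (unfold zz; ring). assumption. }
  destruct (word_preimage_in_class (V0 ++ repeat false (eps + H * f)) u a (powN 3 t * m))
    as [y [Hy Hya]].
  - rewrite odd_steps_app, offset_app, odd_steps_zeros, offset_zeros, length_app, repeat_length,
      Nat.add_0_r, powN_0. fold k.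
    replace (powN 2 (length V0 + (eps + H * f)) * u - (1 * offset V0 + powN 2 (length V0) * 0)
             - powN 3 k * a) with E
      by (unfold E, A, zz; rewrite Nat.add_assoc, !powN_add, powN_mul; ring).
    rewrite Z.mul_assoc, <- powN_add. apply divide_mul_rel_prime; [|assumption..].
    apply rel_prime_sym, rel_prime_powN, rel_prime_of_prime; [apply prime_3 | assumption].
  - exists y, (length (V0 ++ repeat false (eps + H * f))). split; assumption.
Qed.

(* The
   prefix is a neutral word tuning the class modulo [m], followed by [r+1]
   odd steps making the 3-adic condition depend on [eps] only. *)
Lemma predecessors_meet_classes (u m : Z) (t : nat) (a : Z) :
  0 < u -> ~ (3 | u) -> 0 < m -> ~ (2 | m) -> ~ (3 | m) ->
  exists y n, Titer n y = u /\ (powN 3 t * m | y - a).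
Proof.
  intros Hu Hu3 Hm Hm2 Hm3.
  destruct (period 2 m Hm (rel_prime_of_prime 2 m prime_2 Hm2)) as [Q [HQ HQm]].
  assert (HH : powN 2 (2 * Q) = powN 4 Q) by (rewrite powN_mul; reflexivity).
  assert (HmH : (m | powN 2 (2 * Q) - 1)) by (rewrite Nat.mul_comm, powN_mul; apply divide_powN_sub1; assumption).
  (* [4^Q - 1] is a positive multiple of 3; write it as [3^(r+1) w] *)
  assert (H3H : (3 | powN 2 (2 * Q) - 1)) by (rewrite HH; apply divide_powN_sub1; exists 1; ring).
  assert (HHpos : 0 < powN 2 (2 * Q) - 1).
  { rewrite HH. destruct Q as [|Q]; [lia|]. rewrite powN_S. pose proof (powN_pos 4 Q ltac:(lia)). lia. }
  destruct (split_powN 3 ltac:(lia) _ HHpos) as [[|r] [w [Hw Hw3]]].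
  { rewrite powN_0, Z.mul_1_l in Hw. rewrite Hw in H3H. contradiction. }
  destruct (two_power_solves u (S r) Hu3) as [eps Heps].
  destruct (inverse_mod m (powN 3 (S r))) as [s' Hs'].
  { apply rel_prime_powN, rel_prime_of_prime; [apply prime_3 | assumption]. }
  set (X := powN 2 (S r + eps) * u + powN 2 (S r)).
  destruct (adjustable_word m Hm Hm2 Hm3 (s' * X - 1 - a)) as [W [[HW3 HW2] HWc]].
  apply (complete_prefix u a m w (W ++ repeat true (S r)) (2 * Q) eps r); try assumption; try lia;
    rewrite offset_app, odd_steps_app, length_app, offset_ones, odd_steps_ones, repeat_length,
      <- Nat.add_assoc, !powN_add.
  - replace (powN 3 (S r) * offset W + powN 2 (length W) * (powN 3 (S r) - powN 2 (S r))
             + powN 3 (odd_steps W) * powN 3 (S r) * a - powN 2 (length W) * (powN 2 (S r) * powN 2 eps) * u)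
      with (powN 3 (S r) * (offset W + powN 2 (length W) + powN 3 (odd_steps W) * a)
            - powN 2 (length W) * powN 2 (S r) * (powN 2 eps * u + 1)) by ring.
    apply Z.divide_sub_r; [apply Z.divide_factor_l | apply Z.divide_mul_r; assumption].
  - replace (powN 2 (length W) * (powN 2 (S r) * powN 2 eps) * u
             - (powN 3 (S r) * offset W + powN 2 (length W) * (powN 3 (S r) - powN 2 (S r)))
             - powN 3 (odd_steps W) * powN 3 (S r) * a)
      with ((powN 2 (length W) - 1) * (powN 2 (S r) * powN 2 eps * u - powN 3 (S r) + powN 2 (S r))
            - powN 3 (S r) * (offset W - (s' * X - 1 - a))
            - (powN 3 (odd_steps W) - 1) * (powN 3 (S r) * a)
            - (powN 3 (S r) * s' - 1) * X)
      by (unfold X; rewrite powN_add; ring).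
    repeat apply Z.divide_sub_r; apply Z.divide_mul_l + apply Z.divide_mul_r; assumption.
Qed.

(* Every odd modulus [D] is [3^t * m] with [m] coprime to 6, so the
   predecessors of [u] (necessarily positive) meet every class modulo [D]. *)
Lemma predecessor_in_class (u D a : Z) : 0 < u -> ~ (3 | u) -> 0 < D -> ~ (2 | D) ->
  exists y n, 0 < y /\ Titer n y = u /\ (D | y - a).
Proof.
  intros Hu Hu3 HD HD2.
  destruct (split_powN 3 ltac:(lia) D HD) as [t [m [HDm Hm3]]].
  assert (Hm : 0 < m) by (pose proof (powN_pos 3 t ltac:(lia)); nia).
  assert (Hm2 : ~ (2 | m)) by (intros [c Hc]; apply HD2; exists (powN 3 t * c); rewrite HDm, Hc; ring).
  destruct (predecessors_meet_classes u m t a Hu Hu3 Hm Hm2 Hm3) as [y [n [Hy Hya]]].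
  exists y, n. split; [|split; [assumption | rewrite HDm; assumption]].
  destruct (Z_lt_le_dec 0 y) as [|Hle]; [assumption|].
  pose proof (Titer_nonpos n y Hle). lia.
Qed.

(* Multiplying a positive [y] by a suitable power of 2 keeps its class
   modulo an odd [D] and makes it exceed [a1], landing it in the progression
   [a1 + D N] with [N >= 0]. *)
Lemma lift_into_progression (D y a1 : Z) : 0 < D -> ~ (2 | D) -> 0 < y -> (D | y - a1) ->
  exists j N, 0 <= N /\ powN 2 j * y = a1 + D * N.
Proof.
  intros HD HD2 Hy [c Hc].
  destruct (period 2 D HD (rel_prime_of_prime 2 D prime_2 HD2)) as [P [HP [k Hk]]].
  set (J := Z.to_nat a1).
  assert (HJ : a1 < powN 2 (P * J)).
  { assert (Z.of_nat J < powN 2 J) by (apply Z.pow_gt_lin_r; lia).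
    replace (P * J)%nat with (J + (P - 1) * J)%nat by nia. rewrite powN_add.
    pose proof (powN_pos 2 ((P - 1) * J) ltac:(lia)). unfold J in *. nia. }
  assert (Hpow : (D | powN 2 (P * J) - 1)) by (rewrite powN_mul; apply divide_powN_sub1; exists k; assumption).
  destruct Hpow as [l Hl].
  assert (HN : D * (l * y + c) = powN 2 (P * J) * y - a1).
  { rewrite Z.mul_add_distr_l, !(Z.mul_comm D), Z.mul_shuffle0, <- Hl, <- Hc. ring. }
  exists (P * J)%nat, (l * y + c). split; [|lia].
  apply Z.mul_nonneg_cancel_l with D; [assumption|]. rewrite HN.
  pose proof (powN_pos 2 (P * J) ltac:(lia)). nia.
Qed.

(* After its powers of 2 are removed and one odd step is taken, any
   positive [x] reaches a positive number [3 q + 2], not divisible by 3. *)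
Lemma reaches_non_multiple_of_3 (x : Z) : 0 < x -> exists n u, Titer n x = u /\ 0 < u /\ ~ (3 | u).
Proof.
  intros Hx.
  destruct (split_powN 2 ltac:(lia) x Hx) as [e [q [Hxq Hq]]].
  assert (0 < q) by (pose proof (powN_pos 2 e ltac:(lia)); nia).
  destruct (even_or_odd q) as [q' [Hq' | Hq']]; [exfalso; apply Hq; exists q'; lia|].
  exists (1 + e)%nat, (3 * q' + 2). split; [|split; [lia | intros [c Hc]; lia]].
  rewrite Titer_add, Hxq, Titer_halve, Hq'. apply T_odd.
Qed.

(* After [e] steps, where [2^e] exactly divides [d], the progression
   [a + d N] is mapped onto a progression with odd difference. *)
Lemma reduce_progression (a d : Z) : 0 < d ->
  exists e D, 0 < D /\ ~ (2 | D) /\ forall N, Titer e (a + d * N) = Titer e a + D * N.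
Proof.
  intros Hd.
  destruct (split_powN 2 ltac:(lia) d Hd) as [e [d1 [Hdd Hd1]]].
  assert (0 < d1) by (pose proof (powN_pos 2 e ltac:(lia)); nia).
  destruct (Titer_shift e a) as [o Ho].
  exists e, (powN 3 o * d1). split; [pose proof (powN_pos 3 o ltac:(lia)); nia|split].
  - apply prime_not_divide_mul; [apply prime_2| |assumption].
    apply prime_not_divide_powN; [apply prime_2 | intros [c Hc]; lia].
  - intros N. rewrite Hdd, <- Z.mul_assoc, Ho. ring.
Qed.

Theorem mainTheorem1 (f : nat -> nat) (a d : Z) (ha : 0 < a) (hd : 0 < d) :
  sufficient (fun s => exists n : nat,
                 s = 2 ^ (Z.of_nat (f n)) * (a + d * Z.of_nat n)).
Proof.
  split.
  { intros s [n ->]. apply Z.mul_pos_pos; [apply Z.pow_pos_nonneg|]; lia. }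
  intros x hx.
  destruct (reduce_progression a d hd) as [e [D [HD [HD2 Hred]]]].
  destruct (reaches_non_multiple_of_3 x hx) as [n1 [u [Hxu [Hu Hu3]]]].
  destruct (predecessor_in_class u D (Titer e a) Hu Hu3 HD HD2) as [y [n2 [Hy [Hyu Hya]]]].
  destruct (lift_into_progression D y (Titer e a) HD HD2 Hy Hya) as [j [N [HN Hj]]].
  set (n := Z.to_nat N).
  exists (2 ^ Z.of_nat (f n) * (a + d * Z.of_nat n)). split; [exists n; reflexivity|].
  (* the orbit of the chosen element passes through [2^j y], then [y], then [u] *)
  exists n1, (n2 + j + e + f n)%nat.
  rewrite Hxu, !Titer_add. change (2 ^ Z.of_nat (f n)) with (powN 2 (f n)).
  rewrite Titer_halve, Hred. unfold n. rewrite Z2Nat.id, <- Hj, Titer_halve by assumption.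
  symmetry. assumption.
Qed.
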